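(* Let \(S\) be an inverse semigroup with zero and unit. The arrow space of the groupoid \(\mathcal G(S)\) is locally quasi-compact and sober.
   Context: \(E=E(S)\) is the idempotent semilattice. A character on \(E\) is a map \(\varphi\colon E\to\{0,1\}\) with \(\varphi(0)=0\), \(\varphi(1)=1\), \(\varphi(ef)=\varphi(e)\varphi(f)\). \(\hat E\) is the set of characters with the topology generated by \(U_e=\{\varphi:\varphi(e)=1\}\). \(S\) acts on \(\hat E\) by \(s\cdot\varphi(e)=\varphi(s^*es)\) for \(\varphi\in U_{s^*s}\). \(\mathcal G(S)\) has object space \(\hat E\). Its arrows are classes \([s,\varphi]\) (\(s\in S\), \(\varphi\in U_{s^*s}\)), with \((s,\varphi)\sim(t,\psi)\) iff \(\varphi=\psi\) and \(se=te\) for some \(e\in E\) with \(\varphi(e)=1\). The structure maps are \(\mathrm s[s,\varphi]=\varphi\), \(\mathrm r[s,\varphi]=s\cdot\varphi\), \([s,t\cdot\psi][t,\psi]=[st,\psi]\). The arrow topology is generated by the sets \(\{[s,\varphi]:\varphi\in U\}\), \(U\subseteq U_{s^*s}\) open. A space is sober if every non-empty irreducible closed subset is the closure of a unique point. A closed set \(A\) is irreducible if \(A=A_1\cup A_2\) with \(A_i\) closed forces \(A_1=A\) or \(A_2=A\). *)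

From Stdlib Require Import List.
Set Implicit Arguments.

(* An inverse semigroup is a semigroup in which every s has an element s*
   with s s* s = s and s* s s* = s*, and idempotents commute; then s* is
   the unique inverse of s. *)
Record InvSemigroup0 := {
  car :> Type;
  mul : car -> car -> car;
  star : car -> car;
  zero : car;
  one : car;
  mulA : forall x y z, mul x (mul y z) = mul (mul x y) z;
  mul_star_l : forall s, mul (mul s (star s)) s = s;
  mul_star_r : forall s, mul (mul (star s) s) (star s) = star s;
  idem_comm : forall e f, mul e e = e -> mul f f = f -> mul e f = mul f e;
  mul0s : forall s, mul zero s = zero;
  muls0 : forall s, mul s zero = zero;
  mul1s : forall s, mul one s = s;
  muls1 : forall s, mul s one = s
}.

Section Germs.
Variable S : InvSemigroup0.

Definition idem (e : S) : Prop := mul S e e = e.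

(** Characters on E(S).  A character phi : E -> {0,1} is encoded by the
    predicate on S that agrees with phi on E and is false outside E
    (a bijective encoding). *)
Definition is_character (phi : S -> Prop) : Prop :=
  (forall s, phi s -> idem s) /\
  ~ phi (zero S) /\
  phi (one S) /\
  (forall e f, idem e -> idem f -> (phi (mul S e f) <-> phi e /\ phi f)).

Record character := { chf :> S -> Prop; chf_char : is_character chf }.

Definition U_ (e : S) : character -> Prop := fun phi => phi e.

Definition act_fun (s : S) (phi : character) : S -> Prop :=
  fun e => idem e /\ phi (mul S (mul S (star S s) e) s).

Definition in_dom (p : S * character) : Prop :=
  (snd p) (mul S (star S (fst p)) (fst p)).

Definition germ_rel (p q : S * character) : Prop :=
  in_dom p /\ in_dom q /\ snd p = snd q /\
  exists e, idem e /\ (snd p) e /\ mul S (fst p) e = mul S (fst q) e.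

Record arrow := {
  arr_set : S * character -> Prop;
  arr_cls : exists p, in_dom p /\ forall q, arr_set q <-> germ_rel p q
}.

Definition germ_of (s : S) (phi : character) (a : arrow) : Prop :=
  arr_set a (s, phi).

End Germs.
Arguments idem {S}.
Arguments U_ {S}.
Arguments germ_of {S}.

Section Topology.
Variable X : Type.

Definition subset (A B : X -> Prop) := forall x, A x -> B x.
Definition set_eq (A B : X -> Prop) := forall x, A x <-> B x.

Inductive gen_open (B : (X -> Prop) -> Prop) : (X -> Prop) -> Prop :=
| go_base U : B U -> gen_open B U
| go_top : gen_open B (fun _ => True)
| go_inter U V : gen_open B U -> gen_open B V ->
    gen_open B (fun x => U x /\ V x)
| go_union (F : (X -> Prop) -> Prop) :
    (forall U, F U -> gen_open B U) ->
    gen_open B (fun x => exists U, F U /\ U x).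

Variable opens : (X -> Prop) -> Prop.

Definition is_closed (C : X -> Prop) : Prop := opens (fun x => ~ C x).

Definition closure (A : X -> Prop) : X -> Prop :=
  fun x => forall C, is_closed C -> subset A C -> C x.

Definition irreducible (A : X -> Prop) : Prop :=
  is_closed A /\
  forall A1 A2, is_closed A1 -> is_closed A2 ->
    set_eq A (fun x => A1 x \/ A2 x) -> set_eq A1 A \/ set_eq A2 A.

Definition sober : Prop :=
  forall A, is_closed A -> (exists x, A x) -> irreducible A ->
    exists x, set_eq (closure (fun y => y = x)) A /\
      forall x', set_eq (closure (fun y => y = x')) A -> x' = x.

Definition quasi_compact (K : X -> Prop) : Prop :=
  forall F : (X -> Prop) -> Prop,
    (forall U, F U -> opens U) ->
    subset K (fun x => exists U, F U /\ U x) ->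
    exists l : list (X -> Prop),
      (forall U, In U l -> F U) /\
      subset K (fun x => exists U, In U l /\ U x).

Definition locally_quasi_compact : Prop :=
  forall x U, opens U -> U x ->
    exists V K, opens V /\ V x /\ subset V K /\ subset K U /\ quasi_compact K.

End Topology.

Definition hatE_opens (S : InvSemigroup0) : (character S -> Prop) -> Prop :=
  gen_open (fun U => exists e : S, idem e /\ U = U_ e).

Arguments hatE_opens S : clear implicits.

Definition arrow_opens (S : InvSemigroup0) : (arrow S -> Prop) -> Prop :=
  gen_open (fun W => exists (s : S) (U : character S -> Prop),
    hatE_opens S U /\ subset U (U_ (mul S (star S s) s)) /\
    W = (fun a => exists phi, U phi /\ germ_of s phi a)).
Arguments arrow_opens S : clear implicits.

From Stdlib Require Import List Classical.
From Stdlib Require Import FunctionalExtensionality PropExtensionality ProofIrrelevance.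
Set Implicit Arguments.
Unset Strict Implicit.

(* Around an arrow [s, phi] the sets Theta(s, e) = {[s, phi'] : phi'(e) =
   phi'(s*s) = 1} with phi(e) = 1 form a neighbourhood base.  Such a basic set
   has a generic point [s, chi_g], where chi_g is the principal character of
   g = e s*s (chi_g(f) = 1 iff g <= f): every open set containing it contains
   the whole basic set, which is therefore quasi-compact.  If A is closed and
   irreducible and contains a germ of s, the idempotents e for which A meets
   Theta(s, e) form a character psi (irreducibility gives multiplicativity),
   and [s, psi] is a generic point of A; it is unique because the arrow space
   is T0. *)

Section Topology.
Variables (X : Type) (opens : (X -> Prop) -> Prop).

Lemma open_ext U V : opens U -> set_eq U V -> opens V.
Proof.
  intros HU HUV. replace V with U; [exact HU|].
  apply functional_extensionality; intro x. apply propositional_extensionality, HUV.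
Qed.

Lemma closed_compl U : opens U -> is_closed opens (fun x => ~ U x).
Proof. intro HU. apply (open_ext HU). intro x. split; [tauto | apply NNPP]. Qed.

Lemma closure_point_self x : closure opens (fun y => y = x) x.
Proof. intros C _ HC. apply HC. reflexivity. Qed.

Lemma in_closure_point_open x y O :
  closure opens (fun z => z = y) x -> opens O -> O x -> O y.
Proof.
  intros Hxy HO Ox. apply NNPP; intro nOy.
  apply (Hxy _ (closed_compl HO)); [intros z -> | ]; assumption.
Qed.

Lemma quasi_compact_of_generic_point K y :
  K y -> (forall O, opens O -> O y -> subset K O) -> quasi_compact opens K.
Proof.
  intros Ky Hy F HF Hcov. destruct (Hcov y Ky) as [U [FU Uy]].
  exists (U :: nil). split.
  - intros V [<- | []]. exact FU.
  - intros x Kx. exists U. split; [left; reflexivity | exact (Hy U (HF U FU) Uy x Kx)].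
Qed.

Definition T0_space : Prop :=
  forall x y, (forall O, opens O -> (O x <-> O y)) -> x = y.

Lemma sober_of_generic_points :
  T0_space ->
  (forall A, is_closed opens A -> (exists x, A x) -> irreducible opens A ->
     exists x, set_eq (closure opens (fun y => y = x)) A) ->
  sober opens.
Proof.
  intros HT0 Hgen A HA Hne Hirr. destruct (Hgen A HA Hne Hirr) as [x Hx].
  exists x. split; [exact Hx|]. intros x' Hx'.
  assert (Ax : A x) by exact (proj1 (Hx x) (closure_point_self (x := x))).
  assert (Ax' : A x') by exact (proj1 (Hx' x') (closure_point_self (x := x'))).
  apply HT0. intros O HO. split; intro Ox'.
  - exact (in_closure_point_open (proj2 (Hx x') Ax') HO Ox').
  - exact (in_closure_point_open (proj2 (Hx' x) Ax) HO Ox').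
Qed.

Hypothesis opens_union :
  forall U V, opens U -> opens V -> opens (fun x => U x \/ V x).

Lemma closed_diff_open A O :
  is_closed opens A -> opens O -> is_closed opens (fun x => A x /\ ~ O x).
Proof.
  intros HA HO. apply (open_ext (opens_union HA HO)). intro x.
  destruct (classic (A x)), (classic (O x)); tauto.
Qed.

Lemma irreducible_meet A O1 O2 :
  irreducible opens A -> opens O1 -> opens O2 ->
  (exists x, A x /\ O1 x) -> (exists x, A x /\ O2 x) ->
  exists x, A x /\ O1 x /\ O2 x.
Proof.
  intros [HA Hirr] H1 H2 [x1 [Ax1 O1x1]] [x2 [Ax2 O2x2]].
  apply NNPP; intro Hdisj.
  destruct (Hirr _ _ (closed_diff_open HA H1) (closed_diff_open HA H2)) as [E | E].
  - intro x. split; [|tauto]. intro Ax.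
    destruct (classic (O1 x)), (classic (O2 x)); firstorder.
  - apply E in Ax1. tauto.
  - apply E in Ax2. tauto.
Qed.

End Topology.

Lemma gen_open_union2 X (B : (X -> Prop) -> Prop) U V :
  gen_open B U -> gen_open B V -> gen_open B (fun x => U x \/ V x).
Proof.
  intros HU HV.
  assert (Hunion : gen_open B (fun x => exists W, (W = U \/ W = V) /\ W x))
    by (apply go_union; intros W [-> | ->]; assumption).
  apply (open_ext Hunion). intro x. split.
  - intros [W [[-> | ->] HW]]; auto.
  - intros [Ux | Vx]; eauto.
Qed.

Section Germs.
Variable S : InvSemigroup0.
Local Infix "·" := (mul S) (at level 40, left associativity).

Lemma idem_one : idem (one S).
Proof. apply mul1s. Qed.

Lemma idem_mul e f : idem e -> idem f -> idem (e · f).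
Proof.
  unfold idem; intros He Hf.
  rewrite <- mulA, (mulA S f e f), <- (idem_comm S He Hf), <- (mulA S e f f), Hf,
    mulA, He. reflexivity.
Qed.

Lemma idem_star_mul s : idem (star S s · s).
Proof. unfold idem. rewrite mulA, mul_star_r. reflexivity. Qed.

Lemma ch_idem (phi : character S) e : phi e -> idem e.
Proof. apply (chf_char phi). Qed.

Lemma ch_zero (phi : character S) : ~ phi (zero S).
Proof. apply (chf_char phi). Qed.

Lemma ch_one (phi : character S) : phi (one S).
Proof. apply (chf_char phi). Qed.

Lemma ch_mulP (phi : character S) e f :
  idem e -> idem f -> (phi (e · f) <-> phi e /\ phi f).
Proof. apply (chf_char phi). Qed.

Lemma ch_mul (phi : character S) e f : phi e -> phi f -> phi (e · f).
Proof. intros. apply ch_mulP; eauto using ch_idem. Qed.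

Lemma char_eq (phi psi : character S) : (forall e, phi e <-> psi e) -> phi = psi.
Proof.
  destruct phi as [f Hf], psi as [g Hg]. simpl. intro H.
  assert (f = g) as <-.
  { apply functional_extensionality; intro. apply propositional_extensionality, H. }
  f_equal. apply proof_irrelevance.
Qed.

Lemma principal_is_character g :
  idem g -> g <> zero S -> is_character S (fun f => idem f /\ g · f = g).
Proof.
  intros Hg Hg0. split; [now intros f [Hf _]|]. split.
  { intros [_ H]. rewrite muls0 in H. congruence. }
  split; [split; [apply idem_one | apply muls1]|].
  intros a b Ha Hb. split.
  - intros [_ H].
    assert (Hga : g · a = g).
    { rewrite <- H at 1. rewrite <- (mulA S g (a · b) a), <- (mulA S a b a),
        (idem_comm S Hb Ha), (mulA S a a b), Ha. exact H. }
    split; split; auto. rewrite <- Hga at 1. rewrite <- mulA. exact H.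
  - intros [[_ Ha'] [_ Hb']]. split; [apply idem_mul; auto|].
    rewrite mulA, Ha'. exact Hb'.
Qed.

Lemma germ_refl (p : S * character S) : in_dom p -> germ_rel p p.
Proof.
  intros H. repeat split; auto. exists (one S).
  repeat split; [apply idem_one | apply ch_one].
Qed.

Lemma germ_sym (p q : S * character S) : germ_rel p q -> germ_rel q p.
Proof.
  intros [H1 [H2 [H3 [e [He [He1 He2]]]]]].
  repeat split; auto. exists e. rewrite <- H3. auto.
Qed.

Lemma germ_trans (p q r : S * character S) :
  germ_rel p q -> germ_rel q r -> germ_rel p r.
Proof.
  destruct p as [s phi], q as [t psi], r as [u chi]; unfold germ_rel, in_dom; simpl.
  intros [H1 [_ [<- [e [He [He1 He2]]]]]] [_ [K2 [<- [f [Hf [Hf1 Hf2]]]]]].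
  repeat split; auto.
  exists (e · f). split; [apply idem_mul; auto|]. split; [apply ch_mul; auto|].
  rewrite (mulA S s e f), He2, <- (mulA S t e f), (idem_comm S He Hf),
    (mulA S t f e), Hf2, <- mulA, <- (idem_comm S He Hf). reflexivity.
Qed.

Lemma arr_set_germ_rel s phi (a : arrow S) :
  germ_of s phi a -> forall q, arr_set a q <-> germ_rel (s, phi) q.
Proof.
  unfold germ_of. destruct (arr_cls a) as [p [_ Hp]]. intros Hs q.
  apply Hp in Hs. rewrite Hp.
  split; [apply germ_trans, germ_sym, Hs | apply germ_trans, Hs].
Qed.

Lemma germ_of_dom s phi (a : arrow S) : germ_of s phi a -> phi (star S s · s).
Proof. intro H. exact (proj1 (proj1 (arr_set_germ_rel H _) H)). Qed.

Lemma germ_of_char s phi t psi (a : arrow S) :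
  germ_of s phi a -> germ_of t psi a -> phi = psi.
Proof. intros Hs Ht. apply (arr_set_germ_rel Hs) in Ht. apply Ht. Qed.

Lemma germ_of_exists (a : arrow S) : exists s phi, germ_of s phi a.
Proof.
  destruct (arr_cls a) as [[s phi] [Hp Hq]]. exists s, phi.
  apply Hq, germ_refl, Hp.
Qed.

Lemma arrow_eq s phi (a b : arrow S) : germ_of s phi a -> germ_of s phi b -> a = b.
Proof.
  intros Ha Hb.
  assert (E : arr_set a = arr_set b).
  { apply functional_extensionality; intro q. apply propositional_extensionality.
    rewrite (arr_set_germ_rel Ha), (arr_set_germ_rel Hb). reflexivity. }
  destruct a as [sa ca], b as [sb cb]. simpl in E. subst sb.
  f_equal. apply proof_irrelevance.
Qed.

Definition mk_arrow s (phi : character S) (H : phi (star S s · s)) : arrow S :=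
  {| arr_set := germ_rel (s, phi);
     arr_cls := ex_intro _ (s, phi) (conj H (fun q => iff_refl _)) |}.

Lemma mk_arrow_germ s phi H : germ_of s phi (@mk_arrow s phi H).
Proof. apply germ_refl. exact H. Qed.

Lemma hatE_open_basic_nbhd (U : character S -> Prop) :
  hatE_opens S U -> forall phi, U phi ->
  exists e, idem e /\ phi e /\ forall psi : character S, psi e -> U psi.
Proof.
  induction 1 as [U [e [He ->]] | | U V _ IHU _ IHV | F _ IHF]; intros phi Hphi.
  - exists e. auto.
  - exists (one S). split; [apply idem_one|]. split; [apply ch_one | auto].
  - destruct Hphi as [HU HV].
    destruct (IHU _ HU) as [e [He [He1 He2]]], (IHV _ HV) as [f [Hf [Hf1 Hf2]]].
    exists (e · f). split; [apply idem_mul; auto|]. split; [apply ch_mul; auto|].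
    intros psi Hpsi. apply ch_mulP in Hpsi as [Hpe Hpf]; auto.
  - destruct Hphi as [V [FV HV]]. destruct (IHF V FV phi HV) as [e [He [He1 He2]]].
    exists e. split; [|split]; eauto.
Qed.

Definition germ_nbhd (s e : S) : arrow S -> Prop :=
  fun a => exists phi : character S,
    (U_ e phi /\ U_ (star S s · s) phi) /\ germ_of s phi a.

Lemma germ_nbhd_open s e : idem e -> arrow_opens S (germ_nbhd s e).
Proof.
  intros He. apply go_base.
  exists s, (fun phi => U_ e phi /\ U_ (star S s · s) phi).
  split; [|split; [intros phi [_ H]; exact H | reflexivity]].
  apply go_inter; apply go_base; eexists; split; [exact He | reflexivity | |reflexivity].
  apply idem_star_mul.
Qed.

Lemma germ_nbhd_intro s e phi a : germ_of s phi a -> phi e -> germ_nbhd s e a.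
Proof.
  intros Ha He. exists phi. split; [split; [exact He | exact (germ_of_dom Ha)] | exact Ha].
Qed.

Lemma germ_nbhd_mulP s e f a :
  idem e -> idem f -> germ_nbhd s (e · f) a <-> germ_nbhd s e a /\ germ_nbhd s f a.
Proof.
  intros He Hf. split.
  - intros [phi [[Hef _] Ha]]. apply ch_mulP in Hef as [Hpe Hpf]; auto.
    split; eapply germ_nbhd_intro; eauto.
  - intros [[phi [[Hpe _] Ha]] [psi [[Hpf _] Ha']]].
    rewrite (germ_of_char Ha' Ha) in Hpf.
    apply (germ_nbhd_intro Ha), ch_mul; assumption.
Qed.

Lemma arrow_open_basic_nbhd (O : arrow S -> Prop) :
  arrow_opens S O -> forall s phi a, germ_of s phi a -> O a ->
  exists e, idem e /\ phi e /\ subset (germ_nbhd s e) O.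
Proof.
  induction 1 as [O [t [U [HU [HUt ->]]]] | | O1 O2 _ IH1 _ IH2 | F _ IHF];
    intros s phi a Ha HO.
  - destruct HO as [psi [Upsi Ht]].
    destruct (proj1 (arr_set_germ_rel Ha _) Ht) as [_ [_ [Eq [f [Hf [Hpf Hst]]]]]].
    simpl in Eq, Hpf, Hst. subst psi.
    destruct (hatE_open_basic_nbhd HU Upsi) as [e [He [Hpe HeU]]].
    exists (e · f). split; [apply idem_mul; auto|]. split; [apply ch_mul; auto|].
    intros b [phi' [[Hef _] Hb]]. apply ch_mulP in Hef as [Hp'e Hp'f]; auto.
    exists phi'. split; [exact (HeU _ Hp'e)|].
    apply (arr_set_germ_rel Hb).
    repeat split; [exact (germ_of_dom Hb) | exact (HUt _ (HeU _ Hp'e))|].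
    exists f. auto.
  - exists (one S). split; [apply idem_one|]. split; [apply ch_one|]. now intros b _.
  - destruct HO as [HO1 HO2].
    destruct (IH1 _ _ _ Ha HO1) as [e [He [Hpe HeO]]],
      (IH2 _ _ _ Ha HO2) as [f [Hf [Hpf HfO]]].
    exists (e · f). split; [apply idem_mul; auto|]. split; [apply ch_mul; auto|].
    intros b Hb. apply germ_nbhd_mulP in Hb as [Hbe Hbf]; [split | |]; auto.
  - destruct HO as [V [FV HV]]. destruct (IHF V FV _ _ _ Ha HV) as [e [He [Hpe HeV]]].
    exists e. split; [|split]; auto. intros b Hb. exists V. auto.
Qed.

Lemma germ_nbhd_quasi_compact s e : quasi_compact (arrow_opens S) (germ_nbhd s e).
Proof.
  destruct (classic (exists a, germ_nbhd s e a)) as [[a [phi [[Hpe Hpss] _]]] | Hempty].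
  2: { intros F _ _. exists nil. split; [intros U [] | intros a Ha; exfalso; eauto]. }
  set (g := e · (star S s · s)).
  assert (Hpg : phi g) by (apply ch_mul; assumption).
  assert (Hg : idem g) by exact (ch_idem Hpg).
  assert (Hg0 : g <> zero S) by (intro E; rewrite E in Hpg; exact (ch_zero Hpg)).
  pose (chi := Build_character (principal_is_character Hg Hg0)).
  assert (Hchi : chi e /\ chi (star S s · s))
    by (apply ch_mulP; [exact (ch_idem Hpe) | apply idem_star_mul | split; auto]).
  apply (quasi_compact_of_generic_point (y := mk_arrow (proj2 Hchi))).
  { exact (germ_nbhd_intro (mk_arrow_germ _) (proj1 Hchi)). }
  intros O HO Oy.
  destruct (arrow_open_basic_nbhd HO (mk_arrow_germ _) Oy) as [f [Hf [[_ Hgf] HfO]]].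
  intros b [phi' [[Hp'e Hp'ss] Hb]]. apply HfO, (germ_nbhd_intro Hb).
  assert (Hp'g : phi' (g · f)) by (rewrite Hgf; apply ch_mul; assumption).
  apply ch_mulP in Hp'g; tauto.
Qed.

Lemma arrow_locally_quasi_compact : locally_quasi_compact (arrow_opens S).
Proof.
  intros x U HU Ux. destruct (germ_of_exists x) as [s [phi Hx]].
  destruct (arrow_open_basic_nbhd HU Hx Ux) as [e [He [Hpe HeU]]].
  exists (germ_nbhd s e), (germ_nbhd s e).
  repeat split; [apply germ_nbhd_open; exact He | exact (germ_nbhd_intro Hx Hpe) |
    intros z Hz; exact Hz | exact HeU | apply germ_nbhd_quasi_compact].
Qed.

Lemma germ_char_specialize s phi chi (a b : arrow S) :
  (forall O, arrow_opens S O -> O a -> O b) ->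
  germ_of s phi a -> germ_of s chi b -> forall e, phi e -> chi e.
Proof.
  intros Hab Ha Hb e Hpe.
  destruct (Hab _ (germ_nbhd_open s (ch_idem Hpe)) (germ_nbhd_intro Ha Hpe))
    as [p [[Hp _] Hb']].
  rewrite (germ_of_char Hb' Hb) in Hp. exact Hp.
Qed.

Lemma arrow_T0 : T0_space (arrow_opens S).
Proof.
  intros x y Hxy. destruct (germ_of_exists x) as [s [phi Hx]].
  destruct (proj1 (Hxy _ (germ_nbhd_open s idem_one)) (germ_nbhd_intro Hx (ch_one phi)))
    as [chi [_ Hy]].
  assert (E : phi = chi).
  { apply char_eq. intro e. split; intro He.
    - exact (germ_char_specialize (fun O HO => proj1 (Hxy O HO)) Hx Hy He).
    - exact (germ_char_specialize (fun O HO => proj2 (Hxy O HO)) Hy Hx He). }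
  subst chi. exact (arrow_eq Hx Hy).
Qed.

Definition germ_trace (A : arrow S -> Prop) (s e : S) : Prop :=
  idem e /\ exists a, A a /\ germ_nbhd s e a.

Section GenericPoint.
Variables (A : arrow S -> Prop) (s : S) (phi0 : character S) (a0 : arrow S).
Hypotheses (HA : irreducible (arrow_opens S) A) (Aa0 : A a0) (Ha0 : germ_of s phi0 a0).

Lemma germ_trace_is_character : is_character S (germ_trace A s).
Proof.
  split; [now intros e [He _]|]. split.
  { intros [_ [a [_ [phi [[Hp0 _] _]]]]]. exact (ch_zero Hp0). }
  split.
  { split; [apply idem_one|]. exists a0. split; [exact Aa0|].
    apply (germ_nbhd_intro Ha0), ch_one. }
  intros e f He Hf. split.
  - intros [_ [a [Aa Ha]]]. apply germ_nbhd_mulP in Ha as [Hae Haf]; auto.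
    split; split; eauto.
  - intros [[_ He'] [_ Hf']].
    destruct (irreducible_meet (@gen_open_union2 _ _) HA (germ_nbhd_open s He)
      (germ_nbhd_open s Hf) He' Hf') as [c [Ac Hc]].
    split; [apply idem_mul; auto|]. exists c. split; [exact Ac | apply germ_nbhd_mulP; auto].
Qed.

Let psi := Build_character germ_trace_is_character.

Lemma germ_trace_dom : psi (star S s · s).
Proof.
  split; [apply idem_star_mul|]. exists a0. split; [exact Aa0|].
  exact (germ_nbhd_intro Ha0 (germ_of_dom Ha0)).
Qed.

Let x := mk_arrow germ_trace_dom.

Lemma germ_trace_arrow_in : A x.
Proof.
  apply NNPP; intro nAx.
  destruct (arrow_open_basic_nbhd (proj1 HA) (mk_arrow_germ _) nAx)
    as [e [_ [[_ [a [Aa Ha]]] HeA]]].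
  exact (HeA a Ha Aa).
Qed.

Lemma germ_trace_arrow_generic : set_eq (closure (arrow_opens S) (fun y => y = x)) A.
Proof.
  intro y. split.
  - intro Hy. apply Hy; [exact (proj1 HA) | intros z ->; exact germ_trace_arrow_in].
  - intros Ay C HC HxC. apply NNPP; intro nCy.
    destruct (irreducible_meet (@gen_open_union2 _ _) HA HC
      (germ_nbhd_open s idem_one) (ex_intro _ y (conj Ay nCy))
      (ex_intro _ x (conj germ_trace_arrow_in
        (germ_nbhd_intro (mk_arrow_germ _) (ch_one psi)))))
      as [c [Ac [nCc [p [_ Hc]]]]].
    destruct (arrow_open_basic_nbhd HC Hc nCc) as [e [He [Hpe HeC]]].
    assert (Hpsie : psi e)
      by (split; [exact He | exists c; split; [exact Ac | exact (germ_nbhd_intro Hc Hpe)]]).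
    apply (HeC x (germ_nbhd_intro (mk_arrow_germ _) Hpsie)), HxC. reflexivity.
Qed.

End GenericPoint.

Lemma irreducible_generic_point (A : arrow S -> Prop) :
  is_closed (arrow_opens S) A -> (exists x, A x) -> irreducible (arrow_opens S) A ->
  exists x, set_eq (closure (arrow_opens S) (fun y => y = x)) A.
Proof.
  intros _ [a0 Aa0] HA. destruct (germ_of_exists a0) as [s [phi0 Ha0]].
  eexists. exact (germ_trace_arrow_generic HA Aa0 Ha0).
Qed.

End Germs.

Theorem lemma3p3 (S : InvSemigroup0) :
  locally_quasi_compact (arrow_opens S) /\ sober (arrow_opens S).
Proof.
  split.
  - apply arrow_locally_quasi_compact.
  - apply sober_of_generic_points; [apply arrow_T0 | apply irreducible_generic_point].
Qed.
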